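(* Let $A$ be a $\mathbb{G}$-predictable set. Then $A\in\mathcal{L}^o$ if and only if, for every $\mathbb{G}$-optional process $Y$, the process $Y\mathbf{1}_A$ satisfies the global optional splitting formula at $\tau$ with respect to $\mathbb{F}$.
   Context: Let $(\Omega,\mathcal{A},\mathbb{Q})$ be a probability space with a right-continuous filtration $\mathbb{F}=(\mathcal{F}_t)_{t\ge0}$ such that $\mathcal{F}_0$ contains $\mathcal{N}^{\mathcal{F}_\infty}$, where for a $\sigma$-algebra $\mathcal{T}\subset\mathcal{A}$, $\mathcal{N}^{\mathcal{T}}$ denotes the $\sigma$-algebra generated by all subsets of $\mathcal{T}$-measurable $\mathbb{Q}$-null sets. Let $\tau$ be a random variable with values in $[0,\infty]$, let $\mathcal{N}=\mathcal{N}^{\sigma(\tau)\vee\mathcal{F}_\infty}$, and let $\mathbb{G}=(\mathcal{G}_t)_{t\ge0}$ with $\mathcal{G}_t=\mathcal{N}\vee\bigcap_{s>t}(\mathcal{F}_s\vee\sigma(\tau\wedge s))$. Identities between processes are understood up to indistinguishability outside an $\mathcal{N}$-measurable $\mathbb{Q}$-null set. For a function $Y''$ on $[0,\infty]\times(\mathbb{R}_+\times\Omega)$, $Y''(\tau)$ denotes the process $(t,\omega)\mapsto Y''(\tau(\omega),t,\omega)$. A $\mathbb{G}$-optional process $Y$ satisfies the optional splitting formula on a $\mathbb{G}$-optional set $A$ (at $\tau$ with respect to $\mathbb{F}$) if there exist $Y'\in\mathcal{O}(\mathbb{F})$ and a $\mathcal{B}[0,\infty]\otimes\mathcal{O}(\mathbb{F})$-measurable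 function $Y''$ with $Y\mathbf{1}_A=(Y'\mathbf{1}_{[0,\tau)}+Y''(\tau)\mathbf{1}_{[\tau,\infty)})\mathbf{1}_A$; the global optional splitting formula is the case $A=\mathbb{R}_+\times\Omega$. $\mathcal{L}^o$ is the family of $\mathbb{G}$-optional sets $A$ such that every $\mathbb{G}$-optional process satisfies the optional splitting formula on $A$. *)

From HB Require Import structures.
From mathcomp Require Import all_boot all_order all_algebra.
From mathcomp Require Import all_classical all_reals all_analysis measurable_realfun.
Set Implicit Arguments. Unset Strict Implicit. Unset Printing Implicit Defensive.
Import Order.TTheory GRing.Theory Num.Theory.
Local Open Scope classical_set_scope.
Local Open Scope ring_scope.

Section Defs.
Context {d : measure_display} {Omega : measurableType d} {R : realType}.

Definition gen {X : Type} (G : set_system X) : set_system X :=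
  smallest (sigma_algebra setT) G.

Definition sjoin {X : Type} (G1 G2 : set_system X) : set_system X :=
  gen (G1 `|` G2).

Definition sub_sigma (T : set_system Omega) :=
  sigma_algebra setT T /\ (forall E, T E -> measurable E).

Definition nullsys (Q : probability Omega R) (T : set_system Omega)
  : set_system Omega :=
  gen [set E | exists B, T B /\ Q B = 0%E /\ E `<=` B].

Definition Finf (F : R -> set_system Omega) : set_system Omega :=
  gen (\bigcup_(t in [set t : R | 0 <= t]) F t).

Definition filtration_hyp (Q : probability Omega R) (F : R -> set_system Omega) :=
  [/\ (forall t, 0 <= t -> sub_sigma (F t)),
      (forall s t, 0 <= s -> s <= t -> F s `<=` F t),
      (forall t, 0 <= t ->
          [set E | forall s, t < s -> F s E] = F t) &
      nullsys Q (Finf F) `<=` F 0].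

Definition sigma_rv (X : Omega -> \bar R) : set_system Omega :=
  [set X @^-1` B | B in [set B : set \bar R | measurable B]].

Definition Nsys (Q : probability Omega R) (F : R -> set_system Omega)
    (tau : Omega -> \bar R) : set_system Omega :=
  nullsys Q (sjoin (sigma_rv tau) (Finf F)).

Definition Gfilt (Q : probability Omega R) (F : R -> set_system Omega)
    (tau : Omega -> \bar R) (t : R) : set_system Omega :=
  sjoin (Nsys Q F tau)
    [set E | forall s, t < s ->
       sjoin (F s) (sigma_rv (fun w => Order.min (tau w) s%:E)) E].

Definition stopping_time (H : R -> set_system Omega) (T : Omega -> \bar R) :=
  (forall w, (0 <= T w)%E) /\
  forall t, 0 <= t -> H t [set w | (T w <= t%:E)%E].

Definition sint_from (T : Omega -> \bar R) : set (R * Omega) :=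
  [set p | 0 <= p.1 /\ (T p.2 <= p.1%:E)%E].

Definition optional (H : R -> set_system Omega) : set_system (R * Omega) :=
  gen [set sint_from T | T in stopping_time H].

Definition predictable (H : R -> set_system Omega) : set_system (R * Omega) :=
  gen ([set [set p | p.1 = 0 /\ B p.2] | B in H 0] `|`
       [set E | exists s t B, [/\ 0 <= s, s < t, H s B &
            E = [set p | s < p.1 /\ p.1 <= t /\ B p.2]]]).

Definition Rplus_Omega : set (R * Omega) := [set p | 0 <= p.1].

Definition meas_wrt {X : Type} (D : set X) (S : set_system X) (f : X -> R) :=
  forall B : set R, measurable B -> S (D `&` f @^-1` B).

Definition optional_process (H : R -> set_system Omega) (Y : R * Omega -> R) :=
  meas_wrt Rplus_Omega (optional H) Y.

Definition BO (F : R -> set_system Omega) : set_system (\bar R * (R * Omega)) :=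
  gen [set E | exists B C, [/\ measurable (B : set \bar R), optional F C &
        E = B `*` C]].

Definition split_meas (F : R -> set_system Omega) (Y'' : \bar R -> R * Omega -> R) :=
  meas_wrt ([set x : \bar R | (0 <= x)%E] `*` Rplus_Omega) (BO F)
           (fun q => Y'' q.1 q.2).

(* Identity up to indistinguishability outside an N-measurable Q-null set;
   such a set is contained in a (sigma(tau) \/ F_oo)-measurable Q-null set. *)
Definition splitting_on (Q : probability Omega R) (F : R -> set_system Omega)
    (tau : Omega -> \bar R) (Y : R * Omega -> R) (A : set (R * Omega)) :=
  exists (Y' : R * Omega -> R) (Y'' : \bar R -> R * Omega -> R),
    [/\ optional_process F Y', split_meas F Y'' &
      exists E, [/\ sjoin (sigma_rv tau) (Finf F) E, Q E = 0%E &
        forall w, ~ E w -> forall t, 0 <= t ->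
          Y (t, w) * \1_A (t, w) =
          ((if (t%:E < tau w)%E then Y' (t, w) else Y'' (tau w) (t, w))
             * \1_A (t, w))]].

Definition global_splitting Q F tau (Y : R * Omega -> R) :=
  splitting_on Q F tau Y setT.

Definition Lo (Q : probability Omega R) (F : R -> set_system Omega)
    (tau : Omega -> \bar R) (A : set (R * Omega)) :=
  optional (Gfilt Q F tau) A /\
  forall Y, optional_process (Gfilt Q F tau) Y -> splitting_on Q F tau Y A.

End Defs.

From HB Require Import structures.
From mathcomp Require Import all_boot all_order all_algebra.
From mathcomp Require Import all_classical all_reals all_analysis measurable_realfun.
Import Order.TTheory GRing.Theory Num.Theory.
Local Open Scope classical_set_scope.
Local Open Scope ring_scope.
Set Implicit Arguments. Unset Strict Implicit. Unset Printing Implicit Defensive.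

(** The reverse implication only multiplies by [\1_A]. For the direct one it
   suffices that [\1_A] itself splits at [tau] ([A] is "splittable"): the
   splitting of [Y] on [A] times that of [\1_A] is a global splitting of
   [Y \1_A]. Splittable sets form a sigma-algebra, so it is enough to treat the
   generators of the predictable sigma-algebra. Modulo null sets, a set [B] of
   [G_s] is, for every [a > s], equal to some [B1] of [F_a] on [{a < tau}] and
   to [K(tau, .)] on [{tau <= a}] with [K] in [B[0,oo] (x) F_a]; this makes
   [[a, t] x B] splittable. The generators [{0} x B], [B] in [G_0], are handled
   in the same way once right-continuity of [F] brings the sets of
   [F_(1/(n+1))] down to [F_0] along a [liminf]. *)

Section sigma_algebra_closure.
Context {T : Type} (S : set_system T) (hS : sigma_algebra setT S).

Lemma sa_set0 : S set0. Proof. by case: hS. Qed.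

Lemma sa_setC A : S A -> S (~` A).
Proof. by case: hS => _ hC _ /hC; rewrite setTD. Qed.

Lemma sa_setT : S setT.
Proof. by rewrite -setC0; exact/sa_setC/sa_set0. Qed.

Lemma sa_bigcup (A : (set T)^nat) : (forall n, S (A n)) -> S (\bigcup_n A n).
Proof. by case: hS => _ _; apply. Qed.

Lemma sa_setU A B : S A -> S B -> S (A `|` B).
Proof.
by move=> SA SB; rewrite -bigcup2E; apply: sa_bigcup => -[|[|n]] //=; exact: sa_set0.
Qed.

Lemma sa_setI A B : S A -> S B -> S (A `&` B).
Proof.
by move=> SA SB; rewrite -[_ `&` _]setCK setCI; exact/sa_setC/sa_setU/sa_setC/SB/sa_setC.
Qed.

Lemma sa_setD A B : S A -> S B -> S (A `\` B).
Proof. by move=> SA SB; rewrite setDE; exact/sa_setI/sa_setC. Qed.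

Lemma sa_bigcap (A : (set T)^nat) : (forall n, S (A n)) -> S (\bigcap_n A n).
Proof.
by move=> SA; rewrite -[X in S X]setCK setC_bigcap; apply/sa_setC/sa_bigcup => n; exact/sa_setC.
Qed.

Lemma sa_const (P : Prop) : S [set _ | P].
Proof.
have [p|np] := pselect P; [rewrite (propT p); exact: sa_setT|].
rewrite (propF np); exact: sa_set0.
Qed.

End sigma_algebra_closure.

Lemma sub_gen {T : Type} (G : set_system T) : G `<=` gen G.
Proof. exact: sub_smallest. Qed.

Section sum_system.
Context {T1 T2 : Type}.

Definition sum_set (A1 : set T1) (A2 : set T2) : set (T1 + T2) :=
  fun y => match y with inl x => A1 x | inr x => A2 x end.

Definition sum_sys (S1 : set_system T1) (S2 : set_system T2) : set_system (T1 + T2) :=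
  [set W | S1 (inl @^-1` W) /\ S2 (inr @^-1` W)].

Lemma sum_sys_sum_set S1 S2 A1 A2 : S1 A1 -> S2 A2 -> sum_sys S1 S2 (sum_set A1 A2).
Proof. by []. Qed.

Lemma sum_sys_sigma_algebra S1 S2 :
  sigma_algebra setT S1 -> sigma_algebra setT S2 -> sigma_algebra setT (sum_sys S1 S2).
Proof.
move=> h1 h2; split.
- by split; [exact: sa_set0 h1 | exact: sa_set0 h2].
- move=> W [W1 W2]; rewrite setTD.
  by split; [exact: sa_setC h1 _ W1 | exact: sa_setC h2 _ W2].
- by move=> W hW; split; [apply: (sa_bigcup h1) | apply: (sa_bigcup h2)] => n; case: (hW n).
Qed.
End sum_system.

Section representation.
Context {X Y Z : Type} (Nul : set_system Z).
Hypothesis Nul_set0 : Nul set0.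
Hypothesis Nul_bigcup : forall N : (set Z)^nat, (forall n, Nul (N n)) -> Nul (\bigcup_n N n).
Variables (D : set X) (pi : X -> Z) (phi : X -> Y) (SY : set_system Y).

Definition represented (A : set X) := exists W N, [/\ SY W, Nul N &
  forall x, D x -> ~ N (pi x) -> (A x <-> W (phi x))].

Lemma represented_null A N : SY set0 -> Nul N ->
  (forall x, D x -> A x -> N (pi x)) -> represented A.
Proof. by move=> SY0 NN hA; exists set0, N; split => // x Dx Nx; split => // /(hA x Dx). Qed.

Lemma represented_sigma_algebra :
  sigma_algebra setT SY -> sigma_algebra setT represented.
Proof.
move=> hSY; split.
- by apply: (represented_null (N := set0)) => //; exact: sa_set0 hSY.
- move=> A [W [N [SW NN hA]]]; exists (~` W), N; split => //.
    exact: (sa_setC hSY SW).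
  by move=> x Dx Nx; rewrite setTD /=; split => nA /(hA x Dx Nx).
- move=> A hA.
  have /choice[WN hWN] : forall n, exists p : set Y * set Z, [/\ SY p.1, Nul p.2 &
      forall x, D x -> ~ p.2 (pi x) -> (A n x <-> p.1 (phi x))].
    by move=> n; have [W [N hWN]] := hA n; exists (W, N).
  exists (\bigcup_n (WN n).1), (\bigcup_n (WN n).2); split.
  + by apply: (sa_bigcup hSY) => n; case: (hWN n).
  + by apply: Nul_bigcup => n; case: (hWN n).
  + move=> x Dx Nx; have hn n : A n x <-> (WN n).1 (phi x).
      by case: (hWN n) => _ _; apply => // ?; apply: Nx; exists n.
    by split=> -[n _ /hn ?]; exists n.
Qed.

End representation.

Lemma indic_iff {R : pzRingType} {T1 T2} (A : set T1) (B : set T2) x y :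
  (A x <-> B y) -> \1_A x = \1_B y :> R.
Proof.
move=> e; rewrite !indicE; have [Ax|nAx] := pselect (A x).
  by rewrite !mem_set //; exact/e.
by rewrite !memNset // => /e.
Qed.

Lemma meas_wrt_mul_indic {R : realType} {X} (D : set X) (S : set_system X) (f : X -> R) A :
  sigma_algebra setT S -> meas_wrt D S f -> S A -> meas_wrt D S (fun x => f x * \1_A x).
Proof.
move=> hS hf SA B mB.
have SD : S D by have := hf setT measurableT; rewrite preimage_setT setIT.
rewrite (_ : _ `&` _ = (A `&` (D `&` f @^-1` B)) `|` ((D `&` ~` A) `&` [set _ | B 0])).
  apply: (sa_setU hS); first exact: (sa_setI hS SA (hf B mB)).
  exact: (sa_setI hS (sa_setI hS SD (sa_setC hS SA)) (sa_const hS _)).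
apply/seteqP; split => x /=; have [Ax|nAx] := pselect (A x).
- by rewrite indicE mem_set // mulr1 => -[Dx Bfx]; left.
- by rewrite indicE memNset // mulr0 => -[Dx B0]; right.
- by rewrite indicE mem_set // mulr1 => -[[_ []]|[[_ //]]].
- by rewrite indicE memNset // mulr0 => -[[//]|[[]]].
Qed.

Definition box {R : realType} {T : Type} (a t : R) (C : set T) : set (R * T) :=
  [set p | a <= p.1 /\ p.1 <= t /\ C p.2].

Section predictable_generators.
Context {R : realType} {d : measure_display} {Omega : measurableType d}.

Lemma itv_oc_bigcup_box (s t : R) (B : set Omega) :
  [set p | s < p.1 /\ p.1 <= t /\ B p.2] = \bigcup_n box (s + n.+1%:R^-1) t B.
Proof.
apply/seteqP; split => [p [sp [pt Bp]]|p [n _ [sp [pt Bp]]]].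
  by have [n hn] := ltr_add_invr sp; exists n => //; split => //; exact: ltW.
by split => //; apply: lt_le_trans sp; rewrite ltrDl invr_gt0.
Qed.

Lemma predictable_sub (H : R -> set_system Omega) (C : set_system (R * Omega)) :
  sigma_algebra setT C ->
  (forall B, H 0 B -> C (box 0 0 B)) ->
  (forall s a t B, 0 <= s -> s < a -> H s B -> C (box a t B)) ->
  predictable H `<=` C.
Proof.
move=> hC box0 box_gt; apply: smallest_sub => // E [[B HB <-]|[s [t [B [s0 st HB ->]]]]].
  rewrite (_ : [set p | _] = box 0 0 B); first exact: box0.
  apply/seteqP; split => -[t w] /=; first by case=> -> Bw.
  by case=> t0 [t0' Bw]; split => //; apply/le_anti; rewrite t0 t0'.
rewrite itv_oc_bigcup_box; apply: (sa_bigcup hC) => n.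
by apply: (box_gt s) => //; rewrite ltrDl invr_gt0.
Qed.

End predictable_generators.

Section optional_sets.
Context {R : realType} {d : measure_display} {Omega : measurableType d}.
Variable H : R -> set_system Omega.
Hypothesis H_sa : forall t, 0 <= t -> sigma_algebra setT (H t).
Hypothesis H_mono : forall s t, 0 <= s -> s <= t -> H s `<=` H t.

Definition restrict_time (b : R) (C : set Omega) : Omega -> \bar R :=
  fun w => if `[< C w >] then b%:E else +oo%E.

Lemma restrict_time_le b C w x : (restrict_time b C w <= x%:E)%E <-> C w /\ b <= x.
Proof.
rewrite /restrict_time; have [Cw|nCw] := pselect (C w).
  by rewrite asboolT // lee_fin; split => [->|[]].
by rewrite asboolF // leye_eq; split => [|[]].
Qed.

Lemma optional_halfline b C : 0 <= b -> H b C ->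
  optional H [set p | b <= p.1 /\ C p.2].
Proof.
move=> b0 HC; rewrite (_ : [set p | _] = sint_from (restrict_time b C)).
  apply: sub_gen; exists (restrict_time b C) => //; split.
    by move=> w; rewrite /restrict_time; case: ifP; rewrite ?lee_fin ?leey.
  move=> t t0; have [bt|tb] := leP b t.
    rewrite (_ : [set w | _] = C); first exact: H_mono HC.
    by apply/seteqP; split => w /=; rewrite restrict_time_le => // -[].
  rewrite (_ : [set w | _] = set0); first exact: sa_set0 (H_sa t0).
  apply/seteqP; split => // w; rewrite /= restrict_time_le => -[_ bt].
  by move: tb; rewrite ltNge bt.
apply/seteqP; split => p; rewrite /sint_from /= restrict_time_le.
  by move=> [bp Cp]; split; [exact: le_trans bp|].
by case=> _ [].
Qed.

Lemma optional_box a t C : 0 <= a -> H a C -> optional H (box a t C).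
Proof.
move=> a0 HC; have hO := @smallest_sigma_algebra _ setT
  [set sint_from T | T in stopping_time H].
have [ta|le_at] := ltP t a.
  rewrite (_ : box _ _ _ = set0); first exact: sa_set0 hO.
  apply/seteqP; split => // p [ap [pt _]].
  by have := lt_le_trans ta (le_trans ap pt); rewrite ltxx.
have tn0 n : 0 <= t + n.+1%:R^-1 by rewrite addr_ge0 ?invr_ge0 // (le_trans a0 le_at).
rewrite (_ : box _ _ _ = [set p | a <= p.1 /\ C p.2] `\`
    \bigcup_n [set p | t + n.+1%:R^-1 <= p.1 /\ setT p.2]).
  apply: (sa_setD hO); first exact: optional_halfline.
  apply: (sa_bigcup hO) => n; apply: optional_halfline => //.
  exact: sa_setT (H_sa (tn0 n)).
apply/seteqP; split => p.
  case=> ap [pt Cp]; split => // -[n _ [tp _]].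
  by have := le_trans tp pt; rewrite gerDl leNgt invr_gt0 ltr0Sn.
case=> -[ap Cp] ntp; split => //; split => //; rewrite leNgt; apply/negP => tp.
have [n hn] := ltr_add_invr tp; apply: ntp; exists n => //; split => //; exact: ltW.
Qed.

Lemma predictable_optional : predictable H `<=` optional H.
Proof.
apply: predictable_sub => [|B HB|s a t B s0 sa HB].
- exact: smallest_sigma_algebra.
- exact: optional_box.
- apply: optional_box; first exact: le_trans s0 (ltW sa).
  exact: H_mono s0 (ltW sa) _ HB.
Qed.

End optional_sets.

Lemma invSn_le {R : realFieldType} m n : (m <= n)%N -> n.+1%:R^-1 <= m.+1%:R^-1 :> R.
Proof. by move=> mn; rewrite lef_pV2 ?posrE ?ltr0Sn // ler_nat ltnS. Qed.

Section splitting_at_tau.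
Context {R : realType} {d : measure_display} {Omega : measurableType d}
  (Q : probability Omega R) (F : R -> set_system Omega) (tau : Omega -> \bar R).
Hypothesis F_sub : forall t, 0 <= t -> sub_sigma (F t).
Hypothesis F_mono : forall s t, 0 <= s -> s <= t -> F s `<=` F t.
Hypothesis F_right_cont : forall t, 0 <= t -> [set E | forall s, t < s -> F s E] = F t.
Hypothesis tau_ge0 : forall w, (0 <= tau w)%E.
Hypothesis tau_meas : measurable_fun setT tau.

Local Notation G := (Gfilt Q F tau).
Local Notation S := (sjoin (sigma_rv tau) (Finf F)).
Local Notation J r := (sjoin (F r) (sigma_rv (fun w => Order.min (tau w) r%:E))).

Lemma F_sa t : 0 <= t -> sigma_algebra setT (F t).
Proof. by case/F_sub. Qed.

Lemma G_sa t : sigma_algebra setT (G t).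
Proof. exact: smallest_sigma_algebra. Qed.

Lemma G_mono s t : 0 <= s -> s <= t -> G s `<=` G t.
Proof.
move=> _ st; apply: smallest_sub; first exact: G_sa.
move=> E [NE|JE]; apply: sub_gen; [left|right] => // r tr.
exact: JE (le_lt_trans st tr).
Qed.

Lemma S_sa : sigma_algebra setT S.
Proof. exact: smallest_sigma_algebra. Qed.

Lemma S_measurable : S `<=` measurable.
Proof.
apply: smallest_sub; first exact: sigma_algebra_measurable.
move=> E [[B mB <-]|FE]; first by have := tau_meas measurableT mB; rewrite setTI.
move: E FE; apply: smallest_sub; first exact: sigma_algebra_measurable.
by move=> E [t /= t0 FtE]; case: (F_sub t0) => _; apply.
Qed.

Definition Snull (N : set Omega) := S N /\ Q N = 0%E.

Lemma Snull_set0 : Snull set0.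
Proof. by split; [exact: sa_set0 S_sa | exact: measure0]. Qed.

Lemma Snull_bigcup (N : (set Omega)^nat) : (forall n, Snull (N n)) -> Snull (\bigcup_n N n).
Proof.
move=> hN; have SN : S (\bigcup_n N n) by apply: (sa_bigcup S_sa) => n; case: (hN n).
split => //; apply/(measure0_null_setP _ (S_measurable SN)).
apply/negligible_null_set/negligible_bigcup => n; exists (N n).
by case: (hN n) => SNn QNn; split => //; exact: S_measurable.
Qed.

Lemma Snull_setU N1 N2 : Snull N1 -> Snull N2 -> Snull (N1 `|` N2).
Proof.
by move=> h1 h2; rewrite -bigcup2E; apply: Snull_bigcup => -[|[|n]] //=; exact: Snull_set0.
Qed.

Lemma Nsys_sub (C : set_system Omega) : sigma_algebra setT C ->
  (forall E N, Snull N -> E `<=` N -> C E) -> Nsys Q F tau `<=` C.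
Proof. by move=> hC hN; apply: smallest_sub => // E [N [SN [QN EN]]]; exact: hN EN. Qed.

Definition split_tau (p : R * Omega) : (R * Omega) + (\bar R * (R * Omega)) :=
  if (p.1%:E < tau p.2)%E then inl p else inr (tau p.2, p).

(* Sets whose indicator satisfies the global optional splitting formula. *)
Definition splittable :=
  represented Snull Rplus_Omega snd split_tau (sum_sys (optional F) (BO F)).

Lemma splittable_sa : sigma_algebra setT splittable.
Proof.
apply: (represented_sigma_algebra Snull_set0 Snull_bigcup).
by apply: sum_sys_sigma_algebra; exact: smallest_sigma_algebra.
Qed.

Lemma BO_sa : sigma_algebra setT (BO F).
Proof. exact: smallest_sigma_algebra. Qed.

Lemma optional_F_box a t E : 0 <= a -> F a E -> optional F (box a t E).
Proof. by apply: optional_box => [s|]; [exact: F_sa | exact: F_mono]. Qed.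

Definition strip (a t : R) (K : set (\bar R * Omega)) : set (\bar R * (R * Omega)) :=
  [set q | a <= q.2.1 /\ q.2.1 <= t /\ K (q.1, q.2.2)].

Definition strip_sys a := [set K | forall t, BO F (strip a t K)].

Lemma strip_sys_rect a B E : 0 <= a -> measurable B -> F a E -> strip_sys a (B `*` E).
Proof.
move=> a0 mB FE t; rewrite (_ : strip _ _ _ = B `*` box a t E).
  by apply: sub_gen; exists B, (box a t E); split => //; exact: optional_F_box.
by apply/seteqP; split => -[u [s w]]; rewrite /strip /box /setX /=; tauto.
Qed.

Lemma strip_sys_sa a : 0 <= a -> sigma_algebra setT (strip_sys a).
Proof.
move=> a0; split.
- move=> t; rewrite (_ : strip _ _ _ = set0); first exact: sa_set0 BO_sa.
  by apply/seteqP; split => // q [_ []].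
- move=> K SK t; rewrite (_ : strip _ _ _ = strip a t setT `\` strip a t K).
    apply: (sa_setD BO_sa) (SK t); rewrite -setXTT.
    exact: strip_sys_rect a0 measurableT (sa_setT (F_sa a0)) t.
  by apply/seteqP; split => q; rewrite /strip /=; tauto.
- move=> K SK t; rewrite (_ : strip _ _ _ = \bigcup_n strip a t (K n)).
    by apply: (sa_bigcup BO_sa) => n; exact: SK.
  apply/seteqP; split => q /=; first by case=> ? [? [n _ ?]]; exists n.
  by case=> n _ [? [? ?]]; split => //; split => //; exists n.
Qed.

Definition split_at (a : R) (w : Omega) : Omega + (\bar R * Omega) :=
  if (a%:E < tau w)%E then inl w else inr (tau w, w).

Definition split_sys a :=
  represented Snull setT id (split_at a) (sum_sys (F a) (strip_sys a)).

Lemma split_sys_sa a : 0 <= a -> sigma_algebra setT (split_sys a).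
Proof.
move=> a0; apply: (represented_sigma_algebra Snull_set0 Snull_bigcup).
exact: sum_sys_sigma_algebra (F_sa a0) (strip_sys_sa a0).
Qed.

Lemma Nsys_split_sys a : 0 <= a -> Nsys Q F tau `<=` split_sys a.
Proof.
move=> a0; apply: Nsys_sub (split_sys_sa a0) _ => E N NN EN.
apply: represented_null NN (fun w _ => @EN w).
exact: sa_set0 (sum_sys_sigma_algebra (F_sa a0) (strip_sys_sa a0)).
Qed.

Lemma J_split_sys a : 0 <= a -> J a `<=` split_sys a.
Proof.
move=> a0; apply: smallest_sub; first exact: split_sys_sa.
move=> E [FE|[D mD <-]].
- exists (sum_set E [set q | E q.2]), set0; split; last 2 first.
  + exact: Snull_set0.
  + by move=> w _ _; rewrite /split_at; case: ifP.
  apply: sum_sys_sum_set => //; rewrite (_ : [set q | _] = setT `*` E).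
    exact: strip_sys_rect a0 measurableT FE.
  by apply/seteqP; split => q //= [].
- exists (sum_set [set _ | D a%:E] [set q | D q.1]), set0; split; last 2 first.
  + exact: Snull_set0.
  + move=> w _ _; rewrite /split_at /preimage /=; case: ifPn => [/ltW aw|].
      by rewrite min_r.
    by rewrite -leNgt => wa; rewrite min_l.
  apply: sum_sys_sum_set; first exact: sa_const (F_sa a0) _.
  rewrite (_ : [set q | _] = D `*` setT).
    exact: strip_sys_rect a0 mD (sa_setT (F_sa a0)).
  by apply/seteqP; split => q //= [].
Qed.

Lemma G_split_sys s a : 0 <= s -> s < a -> G s `<=` split_sys a.
Proof.
move=> s0 sa; have a0 := le_trans s0 (ltW sa).
apply: smallest_sub; first exact: split_sys_sa.
by move=> E [/(Nsys_split_sys a0)|/(_ a sa)/(J_split_sys a0)].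
Qed.

Lemma measurable_ereal_gt (a : R) : measurable [set u : \bar R | (a%:E < u)%E].
Proof. by rewrite -[X in measurable X]setTI; exact: emeasurable_fun_o_infty. Qed.

Lemma splittable_box a t B : 0 <= a -> split_sys a B -> splittable (box a t B).
Proof.
move=> a0 [W [N [[W1 W2] NN hB]]].
(* [K] is [split_at a] with the value of [tau] turned into a free coordinate. *)
pose K := [set q : \bar R * Omega | W (if (a%:E < q.1)%E then inl q.2 else inr q)].
have SK : strip_sys a K.
  rewrite (_ : K = ([set u | a%:E < u]%E `*` (inl @^-1` W)) `|`
                   (~` [set u | a%:E < u]%E `*` setT `&` (inr @^-1` W))).
    apply: (sa_setU (strip_sys_sa a0)).
      exact: strip_sys_rect a0 (measurable_ereal_gt a) W1.
    apply: (sa_setI (strip_sys_sa a0)) W2.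
    exact: strip_sys_rect a0 (measurableC (measurable_ereal_gt a)) (sa_setT (F_sa a0)).
  apply/seteqP; split => -[u w]; rewrite /K /setX /=; case: ifPn => au.
  - by move=> h; left.
  - by move=> h; right.
  - by case=> [[_ h]|[[/(_ isT)]]].
  - by case=> [[]|[_ h]].
exists (sum_set (box a t (inl @^-1` W)) (strip a t K)), N; split => //.
  by split; [exact: optional_F_box | exact: SK].
move=> [s w] /= s0 Nw; have := hB w I Nw; rewrite /split_at /split_tau /= => e.
case: ifPn => sw /=; last by split => -[? [? /e ?]].
have aw : a <= s -> (a%:E < tau w)%E by move=> as_; apply: le_lt_trans sw; rewrite lee_fin.
by split => -[as_ [st h]]; do 2 split => //; move: e; rewrite (aw as_) => e; apply/e.
Qed.

(* Unlike [split_sys r], this forgets [tau] on [(0, r]] but keeps [F r] on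
   [tau = 0], which is what survives the intersection over [r > 0] defining [G 0]. *)
Definition split0_at (r : R) (w : Omega) : Omega + Omega :=
  if (r%:E < tau w)%E then inl w else inr w.

Definition split0_sys r := represented Snull [set w | (r%:E < tau w)%E \/ tau w = 0%:E]
  id (split0_at r) (sum_sys (F r) (F r)).

Lemma split0_sys_sa r : 0 <= r -> sigma_algebra setT (split0_sys r).
Proof.
move=> r0; apply: (represented_sigma_algebra Snull_set0 Snull_bigcup).
exact: sum_sys_sigma_algebra (F_sa r0) (F_sa r0).
Qed.

Lemma J_split0_sys r : 0 < r -> J r `<=` split0_sys r.
Proof.
move=> r0; have Fr := F_sa (ltW r0).
apply: smallest_sub; first exact: split0_sys_sa (ltW r0).
move=> E [FE|[D mD <-]].
- exists (sum_set E E), set0; split; [by [] | exact: Snull_set0|].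
  by move=> w _ _; rewrite /split0_at; case: ifP.
- exists (sum_set [set _ | D r%:E] [set _ | D 0%:E]), set0; split.
  + by split; exact: sa_const Fr _.
  + exact: Snull_set0.
  move=> w [rw|w0] _; rewrite /split0_at /preimage /=.
    by rewrite rw min_r // ltW.
  have -> : (r%:E < tau w)%E = false by rewrite w0 lte_fin ltNge ltW.
  by rewrite w0 min_l // lee_fin ltW.
Qed.

Definition liminf_set (f : (set Omega)^nat) :=
  [set w | exists m, forall n, (m <= n)%N -> f n w].

Lemma liminf_set_eventually (f : (set Omega)^nat) (P : Prop) w m :
  (forall n, (m <= n)%N -> (P <-> f n w)) -> (P <-> liminf_set f w).
Proof.
move=> hf; split => [p|[k hk]]; first by exists m => n mn; exact/(hf n mn).
by apply/(hf (maxn m k) (leq_maxl _ _))/hk; exact: leq_maxr.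
Qed.

Lemma liminf_set_F0 f : (forall n, F n.+1%:R^-1 (f n)) -> F 0 (liminf_set f).
Proof.
move=> hf; rewrite -F_right_cont // => r r0; have Fr := F_sa (ltW r0).
have [k hk] := ltr_add_invr r0; rewrite add0r in hk.
rewrite (_ : liminf_set f = \bigcup_m \bigcap_n f (m + k + n)%N).
  apply: (sa_bigcup Fr) => m; apply: (sa_bigcap Fr) => n.
  apply: F_mono (hf _) => //; apply/ltW/le_lt_trans/hk/invSn_le.
  by rewrite addnAC leq_addl.
apply/seteqP; split => w [m].
  by move=> hm; exists m => // n _; apply: hm; rewrite -addnA leq_addr.
move=> _ hm; exists (m + k)%N => n mkn; have := hm (n - (m + k))%N I.
by rewrite subnKC.
Qed.

Lemma tau_eventually_gt w : (0%:E < tau w)%E ->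
  exists m, forall n, (m <= n)%N -> ((n.+1%:R^-1)%:E < tau w)%E.
Proof.
case: (tau w) => [x| |] //; last by exists 0%N => *; exact: ltry.
rewrite lte_fin => x0; have [m hm] := ltr_add_invr x0; rewrite add0r in hm.
by exists m => n mn; rewrite lte_fin; exact: le_lt_trans (invSn_le mn) hm.
Qed.

Lemma bigcap_J_split0_sys E : (forall r, 0 < r -> J r E) -> split0_sys 0 E.
Proof.
move=> JE; have /choice[WN hWN] : forall n, exists p : set (Omega + Omega) * set Omega,
    [/\ sum_sys (F n.+1%:R^-1) (F n.+1%:R^-1) p.1, Snull p.2 &
     forall w, (((n.+1%:R^-1)%:E < tau w)%E \/ tau w = 0%:E) -> ~ p.2 w ->
       (E w <-> p.1 (split0_at n.+1%:R^-1 w))].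
  move=> n; have r0 : 0 < n.+1%:R^-1 :> R by rewrite invr_gt0.
  by have [W [N hWN]] := J_split0_sys r0 (JE _ r0); exists (W, N).
exists (sum_set (liminf_set (fun n => (WN n).1 \o inl))
                (liminf_set (fun n => (WN n).1 \o inr))), (\bigcup_n (WN n).2).
split.
- by split; apply: liminf_set_F0 => n; case: (hWN n) => -[].
- by apply: Snull_bigcup => n; case: (hWN n).
move=> w _ Nw; have hE n : ((n.+1%:R^-1)%:E < tau w)%E \/ tau w = 0%:E ->
    E w <-> (WN n).1 (split0_at n.+1%:R^-1 w).
  by case: (hWN n) => _ _ h Dw; apply: h => // Nn; apply: Nw; exists n.
rewrite /split0_at; case: ifPn => [tw|ntw].
  have [m hm] := tau_eventually_gt tw; apply: (liminf_set_eventually (m := m)) => n mn.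
  by have := hE n (or_introl (hm n mn)); rewrite /split0_at (hm n mn).
have w0 : tau w = 0%:E by apply/le_anti; rewrite tau_ge0 andbT leNgt.
apply: (liminf_set_eventually (m := 0%N)) => n _; have := hE n (or_intror w0).
by rewrite /split0_at w0 lte_fin ltNge invr_ge0 ler0n.
Qed.

Lemma split0_sys_split_sys : split0_sys 0 `<=` split_sys 0.
Proof.
move=> E [W [N [[W1 W2] NN hE]]].
exists (sum_set (inl @^-1` W) [set q | W (inr q.2)]), N; split => //.
  split => //; rewrite (_ : [set q | _] = setT `*` (inr @^-1` W)).
    exact: strip_sys_rect (lexx 0) measurableT W2.
  by apply/seteqP; split => q //= [].
move=> w _ Nw; rewrite /split_at; case: ifPn => [tw|ntw].
  by have := hE w (or_introl tw) Nw; rewrite /split0_at tw.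
have w0 : tau w = 0%:E by apply/le_anti; rewrite tau_ge0 andbT leNgt.
by have := hE w (or_intror w0) Nw; rewrite /split0_at (negbTE ntw).
Qed.

Lemma G0_split_sys : G 0 `<=` split_sys 0.
Proof.
apply: subset_trans split0_sys_split_sys; apply: smallest_sub; first exact: split0_sys_sa.
move=> E [NE|]; last exact: bigcap_J_split0_sys.
move: E NE; apply: Nsys_sub (split0_sys_sa (lexx 0)) _ => E N NN EN.
apply: represented_null NN (fun w _ => @EN w).
exact: sa_set0 (sum_sys_sigma_algebra (F_sa (lexx 0)) (F_sa (lexx 0))).
Qed.

Lemma predictable_splittable : predictable G `<=` splittable.
Proof.
apply: predictable_sub => [|B GB|s a t B s0 sa GB].
- exact: splittable_sa.
- exact/splittable_box/G0_split_sys.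
- apply: splittable_box; first exact: le_trans s0 (ltW sa).
  exact: G_split_sys sa _ GB.
Qed.

Lemma splitting_mul_indic Y A : splittable A -> splitting_on Q F tau Y A ->
  global_splitting Q F tau (fun p => Y p * \1_A p).
Proof.
move=> [W [N [[W1 W2] NN hA]]] [Y' [Y'' [oY' mY'' [E [SE QE hY]]]]].
have [SEN QEN] := Snull_setU (conj SE QE) NN.
exists (fun p => Y' p * \1_(inl @^-1` W) p).
exists (fun u p => Y'' u p * \1_(inr @^-1` W) (u, p)); split.
- exact: meas_wrt_mul_indic (smallest_sigma_algebra _ _) oY' W1.
- rewrite /split_meas (_ : (fun q => _) = (fun q => Y'' q.1 q.2 * \1_(inr @^-1` W) q)).
    exact: meas_wrt_mul_indic BO_sa mY'' W2.
  by apply: funext => -[].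
exists (E `|` N); split => // w EN t t0.
have [nE nN] : ~ E w /\ ~ N w by split => ?; apply: EN; [left|right].
rewrite indicT /= !mulr1 (hY w nE t t0) (indic_iff (hA (t, w) t0 nN)) /split_tau /=.
by case: ifP.
Qed.

Lemma splitting_on_global Y A : global_splitting Q F tau (fun p => Y p * \1_A p) ->
  splitting_on Q F tau Y A.
Proof.
move=> [Y' [Y'' [oY' mY'' [E [SE QE hY]]]]]; exists Y', Y''; split => //.
exists E; split => // w nE t t0; have := hY w nE t t0; rewrite indicT /= !mulr1 => <-.
by rewrite -mulrA indicE; case: (_ \in _); rewrite ?mulr1 ?mulr0.
Qed.

End splitting_at_tau.

Theorem mainTheorem4 (R : realType) (d : measure_display) (Omega : measurableType d)
  (Q : probability Omega R) (F : R -> set_system Omega)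
  (hF : filtration_hyp Q F)
  (tau : Omega -> \bar R) (htau0 : forall w, (0 <= tau w)%E)
  (htau : measurable_fun setT tau)
  (A : set (R * Omega)) (hA : predictable (Gfilt Q F tau) A) :
  Lo Q F tau A <->
  (forall Y : R * Omega -> R, optional_process (Gfilt Q F tau) Y ->
     global_splitting Q F tau (fun p => Y p * \1_A p)).
Proof.
(* [F 0] need not contain the null sets: they are already part of [G]. *)
case: hF => F_sub F_mono F_right_cont _.
have A_splittable := predictable_splittable F_sub F_mono F_right_cont htau0 htau hA.
split => [[_ splitY] Y oY|splitYA].
  exact: (splitting_mul_indic F_sub htau A_splittable (splitY Y oY)).
split; last by move=> Y /splitYA/splitting_on_global.
by apply: predictable_optional hA => [t _|s t s0]; [exact: G_sa | exact: G_mono].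
Qed.
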